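(* Let $p\ge5$ be a prime. Let $F_0=0$, $F_1=1$, $F_n=F_{n-1}+F_{n-2}$ ($n\ge2$) be the Fibonacci numbers and $L_0=2$, $L_1=1$, $L_n=L_{n-1}+L_{n-2}$ ($n\ge2$) the Lucas numbers. Let $n$ be the least positive integer such that $p\mid F_n$. Then $$\sum_{j=1}^{n-1}\frac{L_j}{F_j}\equiv\frac{5(n^2-1)}{6}\cdot\frac{F_n}{L_n}\pmod{p^2}.$$
   Context: A congruence between rational numbers modulo $p^2$ means that the difference, written as a fraction whose denominator is coprime to $p$, has numerator divisible by $p^2$. *)

From HB Require Import structures.
From mathcomp Require Import all_boot all_order all_algebra.
Set Implicit Arguments. Unset Strict Implicit. Unset Printing Implicit Defensive.
Import Order.TTheory GRing.Theory Num.Theory.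
Local Open Scope ring_scope.

Fixpoint fib (n : nat) : nat :=
  match n with
  | 0 => 0
  | 1 => 1
  | (m.+1 as k).+1 => (fib k + fib m)%N
  end.

Fixpoint lucas (n : nat) : nat :=
  match n with
  | 0 => 2
  | 1 => 1
  | (m.+1 as k).+1 => (lucas k + lucas m)%N
  end.

Definition rat_congr (p k : nat) (x y : rat) : Prop :=
  exists (a b : int), coprime `|b|%N p /\ x - y = a%:~R / b%:~R
                      /\ (p%:Z ^+ k %| a)%Z.

From mathcomp Require Import all_boot all_order all_algebra.
From mathcomp Require Import zify ring.
Import GRing.Theory Num.Theory.

(* Pairing j with n - j and the addition formula 2 F_(a+b) = F_a L_b + L_a F_b
   give  sum_j L_j / F_j = F_n * sum_j 1 / (F_j F_(n-j)),  so as p | F_n it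
   suffices to know the last sum modulo p.  Modulo p, the ratios v_j = L_j / F_j
   are n-periodic, odd (v_(n-j) = - v_j) and satisfy
   v_(a+b) (v_a + v_b) = v_a v_b + 5; summing this over 1 <= a, b < n computes
   sum_j v_j^2, and 2 L_n / (F_j F_(n-j)) = 5 - v_j^2 then yields
   6 L_n sum_j 1 / (F_j F_(n-j)) = 5 (n^2 - 1) modulo p. *)

Set Implicit Arguments.
Unset Strict Implicit.
Unset Printing Implicit Defensive.

Lemma fibSS m : fib m.+2 = fib m.+1 + fib m. Proof. by []. Qed.
Lemma lucasSS m : lucas m.+2 = lucas m.+1 + lucas m. Proof. by []. Qed.

Lemma fib_lucasS a :
  fib a + lucas a = 2 * fib a.+1 /\ lucas a + 5 * fib a = 2 * lucas a.+1.
Proof. by elim: a => [|a [IH1 IH2]] //; rewrite fibSS lucasSS; lia. Qed.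

Lemma fib_lucas_add a b :
  2 * fib (a + b) = fib a * lucas b + lucas a * fib b /\
  2 * lucas (a + b) = lucas a * lucas b + 5 * fib a * fib b.
Proof.
suff [] : (2 * fib (a + b) = fib a * lucas b + lucas a * fib b /\
           2 * lucas (a + b) = lucas a * lucas b + 5 * fib a * fib b) /\
          (2 * fib (a + b.+1) = fib a * lucas b.+1 + lucas a * fib b.+1 /\
           2 * lucas (a + b.+1) = lucas a * lucas b.+1 + 5 * fib a * fib b.+1) by [].
elim: b => [|b [IH0 IH1]].
  by have := fib_lucasS a; rewrite addn0 addn1 [fib 0]/= [lucas 0]/= [fib 1]/= [lucas 1]/=; lia.
by split=> //; move: IH0 IH1; rewrite !addnS !fibSS !lucasSS; nia.
Qed.

Lemma fib_gt0 j : (0 < j)%N -> (0 < fib j)%N.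
Proof.
suff h k : (0 < fib k.+1)%N /\ (0 < fib k.+2)%N by case: j => // j _; case: (h j).
by elim: k => [|k [h1 h2]] //; split=> //; rewrite fibSS; lia.
Qed.

Local Open Scope ring_scope.

Section FibonacciLucasInField.

Variable F : fieldType.
Local Notation f j := ((fib j)%:R : F).
Local Notation l j := ((lucas j)%:R : F).
(* Since x / 0 = 0, v j = 0 whenever f j = 0, e.g. for j = 0 and j = n below. *)
Local Notation v j := (l j / f j).

Lemma fibF_add a b : 2 * f (a + b) = f a * l b + l a * f b.
Proof. by rewrite -!natrM -natrD -(fib_lucas_add a b).1 natrM. Qed.

Lemma lucasF_add a b : 2 * l (a + b) = l a * l b + 5 * f a * f b.
Proof. by rewrite -!natrM -natrD -(fib_lucas_add a b).2 natrM. Qed.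

Hypothesis two_neq0 : (2 : F) != 0.

Lemma lucas_div_fib_add a b : f a != 0 -> f b != 0 -> f (a + b) != 0 ->
  v (a + b) * (v a + v b) = v a * v b + 5.
Proof.
move=> fa fb fab; have fab' : f a * l b + l a * f b != 0 by rewrite -fibF_add mulf_neq0.
rewrite -[l (a + b)](mulKf two_neq0) -[f (a + b)](mulKf two_neq0) fibF_add lucasF_add.
by field; rewrite two_neq0 fa fb fab'.
Qed.

Lemma sum_lucas_div_fib n : (forall j, (0 < j < n)%N -> f j != 0) ->
  \sum_(1 <= j < n) v j = f n * \sum_(1 <= j < n) (f j * f (n - j))^-1.
Proof.
move=> fib_neq0; apply: (mulfI two_neq0).
rewrite [LHS]mulr_natl mulr2n {2}big_nat_rev -big_split mulrA mulr_sumr /=.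
apply: eq_big_nat => j /andP[j1 jn].
have [fj fnj] : f j != 0 /\ f (n - j) != 0 by split; apply: fib_neq0; lia.
rewrite (_ : (1 + n - j.+1 = n - j)%N); last by lia.
have := fibF_add j (n - j); rewrite subnKC ?(ltnW jn) // => ->.
by field; rewrite fj fnj.
Qed.

Section RankOfApparition.

Variable n : nat.
Hypothesis n_gt0 : (0 < n)%N.
Hypothesis fib_n : f n = 0.
Hypothesis fib_neq0 : forall m, (0 < m < n)%N -> f m != 0.

Lemma rank_gt1 : (1 < n)%N.
Proof.
rewrite ltn_neqAle n_gt0 andbT; apply/eqP => n1.
by move/eqP: fib_n; rewrite -n1 /= mulr1n oner_eq0.
Qed.

Lemma lucas_rank_neq0 : l n != 0.
Proof.
have [m n_eq] : exists m, n = m.+1 by exists n.-1; rewrite prednK.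
have fm : f m != 0 by apply: fib_neq0; have := rank_gt1; lia.
apply/eqP => ln0; have := fibF_add m 1; have := lucasF_add m 1.
rewrite addn1 -n_eq fib_n ln0 [fib 1]/= [lucas 1]/= !mulr1 mulr0 => /esym hl /esym hf.
have four_neq0 : (4 : F) != 0 by rewrite (_ : 4 = 2 * 2) ?mulf_neq0 // -natrM.
have : 4 * f m = (l m + 5 * f m) - (f m + l m) by ring.
rewrite hl hf subrr => /eqP.
by rewrite mulf_eq0 (negbTE four_neq0) (negbTE fm).
Qed.

Lemma fib_addn a : f (a + n) = f a * (l n / 2).
Proof.
apply: (mulfI two_neq0); rewrite fibF_add fib_n mulr0 addr0.
by field; rewrite two_neq0.
Qed.

Lemma lucas_addn a : l (a + n) = l a * (l n / 2).
Proof.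
apply: (mulfI two_neq0); rewrite lucasF_add fib_n mulr0 addr0.
by field; rewrite two_neq0.
Qed.

Lemma lucas_div_fib_addn a : v (a + n) = v a.
Proof.
have ln2 : l n / 2 != 0 by rewrite mulf_neq0 ?invr_eq0 ?lucas_rank_neq0.
by rewrite fib_addn lucas_addn invfM mulrACA divff // mulr1.
Qed.

Lemma lucas_div_fib_subn a : (0 < a < n)%N -> v (n - a) = - v a.
Proof.
move=> a_range; have [fa fna] : f a != 0 /\ f (n - a) != 0 by split; apply: fib_neq0; lia.
have := fibF_add (n - a) a; rewrite subnK ?fib_n; last by lia.
move=> /esym/eqP; rewrite mulr0 addrC addr_eq0 => /eqP el.
rewrite -[l (n - a)](mulfK fa) el.
by field; rewrite fa fna.
Qed.

Lemma fib_neq0_lt2n m : (0 < m < n + n)%N -> m != n -> f m != 0.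
Proof.
move=> m_range mn; have [m_lt|m_ge] := ltnP m n; first by apply: fib_neq0; lia.
rewrite -(subnK m_ge) fib_addn !mulf_neq0 ?invr_eq0 ?lucas_rank_neq0 //.
by apply: fib_neq0; lia.
Qed.

Lemma sum_lucas_div_fib_eq0 : \sum_(1 <= a < n) v a = 0.
Proof.
set S := \sum_(1 <= a < n) v a.
have : S = - S.
  rewrite {1}/S big_nat_rev -sumrN; apply: eq_big_nat => a a_range.
  by rewrite (_ : 1 + n - a.+1 = n - a)%N ?lucas_div_fib_subn //; lia.
move/eqP; rewrite -addr_eq0 -mulr2n -mulr_natl mulf_eq0 (negbTE two_neq0).
by move/eqP.
Qed.

Lemma sum_lucas_div_fib_shift a : \sum_(1 <= b < n) v (a + b) = - v a.
Proof.
suff : \sum_(0 <= b < n) v (a + b) = 0.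
  by rewrite big_ltn // addn0 => /eqP; rewrite addrC addr_eq0 => /eqP.
elim: a => [|a IH].
  rewrite big_ltn // add0n [fib 0]/= invr0 mulr0 add0r -[RHS]sum_lucas_div_fib_eq0.
  by apply: eq_bigr => b _; rewrite add0n.
rewrite -[RHS]IH; apply: (addrI (v a)).
have e := @big_nat_recl _ 0 +%R n 0 (fun b => v (a + b)) (leq0n n).
rewrite big_nat_recr //= addn0 lucas_div_fib_addn addrC in e; rewrite e.
by congr (_ + _); apply: eq_bigr => b _; rewrite addSnnS.
Qed.

Lemma sum_lucas_div_fib_row a : (0 < a < n)%N ->
  \sum_(1 <= b < n) (v a * v b + 5) =
  \sum_(1 <= b < n) v (a + b) * (v a + v b) + (5 - v a ^+ 2).
Proof.
move=> a_range.
transitivity (\sum_(1 <= b < n)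
    (v (a + b) * (v a + v b) + (b == n - a)%N%:R * (5 - v a ^+ 2))).
  apply: eq_big_nat => b b_range; case: eqP => [->|b_neq].
    (* the addition formula fails only here, where f (a + b) = f n = 0 *)
    rewrite subnKC; last by lia.
    by rewrite fib_n invr0 mulr0 mul0r add0r mul1r lucas_div_fib_subn // mulrN -expr2 addrC.
  have [fa fb] : f a != 0 /\ f b != 0 by split; apply: fib_neq0.
  have fab : f (a + b) != 0 by apply: fib_neq0_lt2n; lia.
  by rewrite mul0r addr0 lucas_div_fib_add.
rewrite big_split /=; congr (_ + _).
have na_mem : (n - a)%N \in index_iota 1 n by rewrite mem_index_iota; lia.
rewrite (bigD1_seq (n - a)%N) ?iota_uniq //= eqxx mul1r big1 ?addr0 //.
by move=> b /negbTE ->; rewrite mul0r.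
Qed.

Lemma sum2_lucas_div_fib_add :
  \sum_(1 <= a < n) \sum_(1 <= b < n) v (a + b) * (v a + v b) =
  - (\sum_(1 <= a < n) v a ^+ 2) *+ 2.
Proof.
under eq_bigr => a _ do rewrite (eq_bigr _ (fun b _ => mulrDr _ _ _)) big_split /=.
rewrite big_split /= [X in _ + X]exchange_big /=.
under eq_bigr => a _ do rewrite -mulr_suml sum_lucas_div_fib_shift.
under [X in _ + X]eq_bigr => b _ do under eq_bigr => a _ do rewrite addnC.
under [X in _ + X]eq_bigr => b _ do rewrite -mulr_suml sum_lucas_div_fib_shift.
by rewrite mulr2n -sumrN; congr (_ + _); apply: eq_bigr => a _; rewrite mulNr expr2.
Qed.

Lemma sum_lucas_div_fib_sqr :
  3 * \sum_(1 <= a < n) v a ^+ 2 = 5 * (n%:R - 1) * (2 - n%:R).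
Proof.
set P := \sum_(1 <= a < n) v a ^+ 2.
have rows : \sum_(1 <= a < n) \sum_(1 <= b < n) (v a * v b + 5) =
    \sum_(1 <= a < n) (\sum_(1 <= b < n) v (a + b) * (v a + v b) + (5 - v a ^+ 2)).
  exact: eq_big_nat _ _ sum_lucas_div_fib_row.
rewrite big_split /= sum2_lucas_div_fib_add sumrB sumr_const_nat -/P in rows.
have total : \sum_(1 <= a < n) \sum_(1 <= b < n) (v a * v b + 5) = 5 * (n%:R - 1) ^+ 2.
  under eq_bigr => a _ do rewrite big_split /= -mulr_sumr sum_lucas_div_fib_eq0 mulr0 add0r.
  by rewrite !sumr_const_nat -mulrnA -[_ *+ (_ * _)]mulr_natr natrM natrB.
rewrite total -[_ *+ (n - 1)]mulr_natr natrB // in rows.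
have -> : 3 * P = 5 * (n%:R - 1) - (- P *+ 2 + (5 * (n%:R - 1) - P)) by ring.
by rewrite -rows; ring.
Qed.

Lemma lucas_div_fib_pair j : (0 < j < n)%N ->
  2 * l n / (f j * f (n - j)) = 5 - v j ^+ 2.
Proof.
move=> j_range; have [fj fnj] : f j != 0 /\ f (n - j) != 0 by split; apply: fib_neq0; lia.
have -> : 2 * l n = l j * l (n - j) + 5 * f j * f (n - j).
  by rewrite -lucasF_add subnKC //; lia.
rewrite -[l (n - j)](divfK fnj) lucas_div_fib_subn //.
by field; rewrite fj fnj.
Qed.

Lemma sum_inv_fib_pairs :
  6 * l n * \sum_(1 <= j < n) (f j * f (n - j))^-1 = 5 * (n%:R ^+ 2 - 1).
Proof.
have pairs : 2 * l n * \sum_(1 <= j < n) (f j * f (n - j))^-1 =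
    \sum_(1 <= j < n) (5 - v j ^+ 2).
  by rewrite mulr_sumr; apply: eq_big_nat => j j_range; rewrite lucas_div_fib_pair.
rewrite sumrB sumr_const_nat -[_ *+ (n - 1)]mulr_natr natrB // in pairs.
have -> : 6 * l n * \sum_(1 <= j < n) (f j * f (n - j))^-1 =
    3 * (2 * l n * \sum_(1 <= j < n) (f j * f (n - j))^-1) by ring.
by rewrite pairs mulrBr sum_lucas_div_fib_sqr; ring.
Qed.

End RankOfApparition.

End FibonacciLucasInField.

Definition reduces_to {p : nat} (x : rat) (r : 'F_p) := exists a b : int,
  [/\ (b%:~R : 'F_p) != 0, x = a%:~R / b%:~R & r = a%:~R / b%:~R].

Lemma intr_frac_add (K : fieldType) (a b c d : int) :
  (b%:~R : K) != 0 -> (d%:~R : K) != 0 ->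
  a%:~R / b%:~R + c%:~R / d%:~R = (a * d + c * b)%:~R / (b * d)%:~R :> K.
Proof. by move=> b0 d0; rewrite intrD !intrM; field; rewrite b0 d0. Qed.

Section ReductionModp.

Variable p : nat.

Lemma reduces_to_frac (a b : int) :
  (b%:~R : 'F_p) != 0 -> reduces_to (a%:~R / b%:~R) (a%:~R / b%:~R : 'F_p).
Proof. by exists a, b. Qed.

Lemma reduces_to_inv_nat k : (k%:R : 'F_p) != 0 -> reduces_to k%:R^-1 (k%:R^-1 : 'F_p).
Proof. by move=> k0; have := @reduces_to_frac 1 k; rewrite !mul1r; apply. Qed.

Lemma reduces_to_add x y (r s : 'F_p) :
  reduces_to x r -> reduces_to y s -> reduces_to (x + y) (r + s).
Proof.
move=> [a [b [b0 -> ->]]] [c [d [d0 -> ->]]].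
have [b0' d0'] : (b%:~R : rat) != 0 /\ (d%:~R : rat) != 0.
  by split; rewrite intr_eq0; [apply: contra b0 | apply: contra d0] => /eqP ->.
exists (a * d + c * b), (b * d); split; first by rewrite intrM mulf_neq0.
  exact: intr_frac_add b0' d0'.
exact: intr_frac_add b0 d0.
Qed.

Lemma reduces_to_opp x (r : 'F_p) : reduces_to x r -> reduces_to (- x) (- r).
Proof. by move=> [a [b [b0 -> ->]]]; exists (- a), b; split; rewrite // intrN mulNr. Qed.

Lemma reduces_to_sum n (X : nat -> rat) (R : nat -> 'F_p) :
  (forall j, (1 <= j < n)%N -> reduces_to (X j) (R j)) ->
  reduces_to (\sum_(1 <= j < n) X j) (\sum_(1 <= j < n) R j).
Proof.
move=> XR; rewrite big_nat_cond [X in reduces_to _ X]big_nat_cond.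
apply: (big_rec2 reduces_to); first by exists 0, 1; rewrite !mul0r oner_neq0.
by move=> j x r /andP[/XR jXR _]; apply: reduces_to_add.
Qed.

End ReductionModp.

Lemma rat_congr_mul p k m x y (z : rat) : prime p -> (p ^ k %| m)%N ->
  reduces_to z (0 : 'F_p) -> x - y = m%:R * z -> rat_congr p k.+1 x y.
Proof.
have Fp_dvdz := dvdz_pcharf (pchar_Fp _).
move=> hp pkm [a [b [b0 -> /esym/eqP ab0]]] xy.
move: ab0; rewrite mulf_eq0 invr_eq0 (negbTE b0) orbF -Fp_dvdz // => pa.
exists (m%:Z * a), b; split; [|split].
- by rewrite coprime_sym prime_coprime //; move: b0; rewrite -Fp_dvdz.
- by rewrite xy intrM mulrA.
- by rewrite exprSr; apply: dvdz_mul pa; rewrite -[p%:Z]natz -natrX natz.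
Qed.

Lemma reduces_to_sum_inv_fib_pairs p n :
  (forall j, (0 < j < n)%N -> (fib j)%:R != 0 :> 'F_p) ->
  reduces_to (\sum_(1 <= j < n) ((fib j)%:R * (fib (n - j))%:R)^-1)
             (\sum_(1 <= j < n) ((fib j)%:R * (fib (n - j))%:R)^-1 : 'F_p).
Proof.
move=> fib_neq0; apply: reduces_to_sum => j j_range.
rewrite -!natrM; apply: reduces_to_inv_nat.
by rewrite natrM mulf_neq0 // fib_neq0 //; lia.
Qed.

Lemma Fp_nat_neq0 p k : prime p -> (0 < k < p)%N -> (k%:R : 'F_p) != 0.
Proof.
move=> hp /andP[k0 kp]; rewrite -(dvdn_pcharf (pchar_Fp hp)).
by apply: contraTN kp => /(dvdn_leq k0); rewrite leqNgt.
Qed.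

Theorem corollary1p2 (p n : nat) (hp : prime p) (hp5 : (5 <= p)%N)
  (hn : (0 < n)%N) (hdiv : (p %| fib n)%N)
  (hmin : forall m : nat, (0 < m)%N -> (m < n)%N -> ~~ (p %| fib m)%N) :
  rat_congr p 2
    (\sum_(1 <= j < n) ((lucas j)%:R / (fib j)%:R : rat))
    ((5 * (n%:R ^+ 2 - 1) / 6) * ((fib n)%:R / (lucas n)%:R)).
Proof.
have Fp_dvdn := dvdn_pcharf (pchar_Fp hp).
have two_neq0 : (2 : 'F_p) != 0 by apply: Fp_nat_neq0; lia.
have six_neq0 : (6 : 'F_p) != 0 by rewrite (natrM _ 2 3) mulf_neq0 // Fp_nat_neq0 //; lia.
have fib_n : (fib n)%:R = 0 :> 'F_p by apply/eqP; rewrite -Fp_dvdn.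
have fib_neq0 m : (0 < m < n)%N -> (fib m)%:R != 0 :> 'F_p.
  by case/andP=> m0 mn; rewrite -Fp_dvdn hmin.
have lucas_n := lucas_rank_neq0 two_neq0 hn fib_n fib_neq0.
have int_frac (K : fieldType) : 5 * (n%:R ^+ 2 - 1) / 6 / (lucas n)%:R =
    (5 * (n%:Z ^+ 2 - 1))%:~R / (6 * (lucas n)%:Z)%:~R :> K.
  by rewrite !intrM intrB rmorphXn /= invfM mulrA.
have sum_eq : 0 = \sum_(1 <= j < n) ((fib j)%:R * (fib (n - j))%:R)^-1 -
                  5 * (n%:R ^+ 2 - 1) / 6 / (lucas n)%:R :> 'F_p.
  rewrite -(sum_inv_fib_pairs two_neq0 hn fib_n fib_neq0).
  by field; rewrite six_neq0 lucas_n.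
apply: (@rat_congr_mul p 1 (fib n) _ _
  (\sum_(1 <= j < n) ((fib j)%:R * (fib (n - j))%:R)^-1 -
   5 * (n%:R ^+ 2 - 1) / 6 / (lucas n)%:R)) => //.
  rewrite sum_eq !int_frac.
  apply: reduces_to_add (reduces_to_sum_inv_fib_pairs fib_neq0) _.
  by apply/reduces_to_opp/reduces_to_frac; rewrite intrM mulf_neq0.
rewrite sum_lucas_div_fib //; first by ring.
by move=> j /andP[j0 _]; rewrite pnatr_eq0 -lt0n fib_gt0.
Qed.
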